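(* Let $(\lambda_n)_{n\ge0}$ be an increasing sequence of non-negative real numbers tending to infinity and let $(c_n)_{n\ge0}$ be complex numbers. Then $$\sum_{\lambda_n\le x}\lambda_n|c_n|=O(x)\quad(x\to\infty)$$ holds if and only if $$\sum_{x\le\lambda_n}\frac{|c_n|}{\lambda_n}=O\!\left(\frac1x\right)\quad(x\to\infty).$$ *)

From HB Require Import structures.
From mathcomp Require Import all_boot all_order all_algebra.
From mathcomp Require Import all_classical all_reals all_analysis.
From mathcomp Require Import complex.
Set Implicit Arguments. Unset Strict Implicit. Unset Printing Implicit Defensive.
Import Order.TTheory GRing.Theory Num.Theory.
Local Open Scope ring_scope.

(* modulus |z| = sqrt (Re z ^ 2 + Im z ^ 2) of a complex number z : R[i] *)
Definition cmod (R : realType) (z : R[i]) : R := ComplexField.Normc.normc z.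

From HB Require Import structures.
From mathcomp Require Import all_boot all_order all_algebra.
From mathcomp Require Import all_classical all_reals all_analysis.
From mathcomp Require Import complex zify ring lra.
Set Implicit Arguments. Unset Strict Implicit. Unset Printing Implicit Defensive.
Import Order.TTheory GRing.Theory Num.Theory.
Local Open Scope ring_scope.

(* Write a_n = |c_n|. Both directions are one Abel summation, because
   a_n / lam_n = (lam_n a_n) lam_n^-2 and lam_n a_n = (a_n / lam_n) lam_n^2:
   if the partial sums S_k of d_n >= 0 satisfy S_k w_k <= C for a positive
   nonincreasing weight w, then S_k (w_k^2 - w_(k+1)^2) <= 2 C (w_k - w_(k+1))
   telescopes to sum_n d_n w_n^2 <= 2 C w_0.  With d_n = lam_n a_n and
   w = 1/lam, started at the first lam_m >= x, the head bound gives the tail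
   bound; with d_n = a_n / lam_n and w = lam, summed backwards from the last
   lam_K <= x, the tail bound gives the head bound. *)

Lemma upclosed_nat_threshold (P : pred nat) :
  (forall m n, (m <= n)%N -> P m -> P n) -> (exists n, P n) ->
  exists m, forall n, P n = (m <= n)%N.
Proof.
move=> P_up exP; have [m Pm m_min] := ex_minnP exP.
by exists m => n; apply/idP/idP => [/m_min | /P_up]; last exact.
Qed.

Section FiniteSums.
Variable R : realType.
Implicit Types (f d w : nat -> R) (C : R).

Lemma sum_nat_mask_geq f m N :
  \sum_(0 <= n < N) (if (m <= n)%N then f n else 0) = \sum_(m <= n < N) f n.
Proof. by rewrite [RHS]big_geq_mkord -big_mkord [RHS]big_mkcond. Qed.

Lemma sum_nat_mask_ltn f M N :
  \sum_(0 <= n < N) (if (n < M)%N then f n else 0) = \sum_(0 <= n < minn N M) f n.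
Proof.
case: (leqP N M) => [NM | MN].
  by apply: eq_big_nat => n /andP[_ /leq_trans->].
by rewrite (big_nat_widen _ _ _ _ _ (ltnW MN)) [RHS]big_mkcond.
Qed.

Lemma ler_sum_nat_widen f m N1 N2 : (forall n, 0 <= f n) -> (N1 <= N2)%N ->
  \sum_(m <= n < N1) f n <= \sum_(m <= n < N2) f n.
Proof.
move=> f_ge0 N12; rewrite (big_nat_widen _ _ _ _ _ N12) big_mkcond /=.
by apply: ler_sum_nat => n _; case: ifP.
Qed.

Lemma sum_nat_shift f m N :
  \sum_(m <= n < N) f n = \sum_(0 <= i < N - m) f (i + m)%N.
Proof. by rewrite -{1}[m]add0n big_addn. Qed.

Lemma sum_nat_rev_prefix f N k : (k <= N)%N ->
  \sum_(0 <= i < k.+1) f (N - i)%N = \sum_(N - k <= n < N.+1) f n.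
Proof.
move=> kN; rewrite big_nat_rev sum_nat_shift.
have -> : (N.+1 - (N - k) = k.+1)%N by lia.
by apply: eq_big_nat => i /andP[_ ik]; congr f; lia.
Qed.

Lemma mulr_sqr_subr_le (S C u v : R) :
  0 <= S -> S * u <= C -> 0 <= v <= u -> S * (u ^+ 2 - v ^+ 2) <= 2 * C * (u - v).
Proof.
move=> S_ge0 Su /andP[v_ge0 vu].
have Sv : S * v <= S * u by rewrite ler_wpM2l.
have : 0 <= (C - S * u) * (u - v) by rewrite mulr_ge0 // subr_ge0.
nra.
Qed.

Lemma prefix_sum_weighted_sqr_le d w C N :
  (forall n, 0 <= d n) -> (forall n, (n <= N)%N -> 0 < w n) ->
  (forall n, (n < N)%N -> w n.+1 <= w n) ->
  (forall k, (k <= N)%N -> (\sum_(0 <= n < k.+1) d n) * w k <= C) ->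
  \sum_(0 <= n < N.+1) d n * w n ^+ 2 <= 2 * C * w 0.
Proof.
move=> d_ge0 w_gt0 w_dec Sw_le.
have S_ge0 k : 0 <= \sum_(0 <= n < k) d n by rewrite sumr_ge0.
have partial_le k : (k <= N)%N -> \sum_(0 <= n < k.+1) d n * w n ^+ 2 <=
    (\sum_(0 <= n < k.+1) d n) * w k ^+ 2 + 2 * C * (w 0 - w k).
  elim: k => [_ | k IHk kN]; first by rewrite !big_nat1 subrr mulr0 addr0.
  rewrite !(big_nat_recr k.+1 0) //=.
  have := @mulr_sqr_subr_le _ C (w k) (w k.+1) (S_ge0 k.+1) (Sw_le k (ltnW kN)).
  rewrite ltW ?w_dec ?w_gt0 // => /(_ isT) step.
  have := IHk (ltnW kN); lra.
apply: le_trans (partial_le N (leqnn N)) _.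
have := Sw_le N (leqnn N); have := S_ge0 N.+1; have := w_gt0 N (leqnn N).
have := ltW (w_gt0 0%N (leq0n N)).
move: (\sum_(0 <= n < N.+1) _) (w N) (w 0%N) => S u u0; nra.
Qed.

Lemma suffix_sum_weighted_sqr_le d w C N :
  (forall n, 0 <= d n) -> (forall n, (n <= N)%N -> 0 < w n) ->
  (forall n, (n < N)%N -> w n <= w n.+1) ->
  (forall k, (k <= N)%N -> (\sum_(k <= n < N.+1) d n) * w k <= C) ->
  \sum_(0 <= n < N.+1) d n * w n ^+ 2 <= 2 * C * w N.
Proof.
move=> d_ge0 w_gt0 w_inc Sw_le.
rewrite -[N in w N]subn0.
have := @prefix_sum_weighted_sqr_le (fun i => d (N - i)%N) (fun i => w (N - i)%N) C N.
rewrite (@sum_nat_rev_prefix (fun n => d n * w n ^+ 2) N N (leqnn N)) subnn; apply => //.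
- by move=> n _; apply: w_gt0; apply: leq_subr.
- by move=> n nN; rewrite -(subnSK nN) w_inc //; lia.
- by move=> k kN; rewrite sum_nat_rev_prefix // Sw_le // leq_subr.
Qed.

Lemma nneseries_mask_le (b : pred nat) f (B : R) : (forall n, 0 <= f n) ->
  (\sum_(0 <= n <oo) (if b n then (f n)%:E else 0%E) <= B%:E)%E <->
  (forall N, \sum_(0 <= n < N) (if b n then f n else 0) <= B).
Proof.
move=> f_ge0; set g := fun n => if b n then f n else 0.
have g_ge0 n : (0 <= (g n)%:E)%E by rewrite lee_fin /g; case: ifP.
rewrite (@eq_eseriesr _ _ (fun n => (g n)%:E)); last by move=> n _; rewrite /g; case: ifP.
split=> [le_B N | le_B].
  rewrite -lee_fin -sumEFin; apply: le_trans _ le_B.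
  by apply: nneseries_lim_ge => n _ _; apply: g_ge0.
apply: lime_le; first by apply: is_cvg_nneseries => n _ _; apply: g_ge0.
by apply: nearW => N; rewrite sumEFin lee_fin.
Qed.

End FiniteSums.

Section Dirichlet.
Variables (R : realType) (lam a : nat -> R).
Hypothesis a_ge0 : forall n, 0 <= a n.
Hypothesis lam_incr : {homo lam : m n / (m < n)%N >-> m < n}.

Let lam_le m n : (lam m <= lam n) = (m <= n)%N.
Proof. exact: (le_mono lam_incr). Qed.

Lemma sum_div_le_of_head_sums_le C m N : 0 <= C -> 0 < lam m ->
  (forall k, (m <= k)%N -> \sum_(m <= n < k.+1) lam n * a n <= C * lam k) ->
  \sum_(m <= n < N) a n / lam n <= 2 * C / lam m.
Proof.
move=> C_ge0 lam_m_gt0 head_le.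
have lam_gt0 n : (m <= n)%N -> 0 < lam n.
  by move=> mn; apply: lt_le_trans lam_m_gt0 _; rewrite lam_le.
case: (leqP N m) => [Nm | mN].
  by rewrite big_geq // divr_ge0 ?mulr_ge0 // ltW.
have [K ->] : exists K, N = (K + m).+1 by exists (N - m.+1)%N; lia.
rewrite sum_nat_shift -addSn addnK.
have div_sqr n : (m <= n)%N -> a n / lam n = lam n * a n * (lam n)^-1 ^+ 2.
  by move=> mn; field; rewrite lt0r_neq0 ?lam_gt0.
rewrite (eq_bigr _ (fun i _ => div_sqr (i + m)%N (leq_addl _ _))).
apply: (@prefix_sum_weighted_sqr_le R (fun i => lam (i + m) * a (i + m))
  (fun i => (lam (i + m))^-1) C K).
- by move=> n; rewrite mulr_ge0 // ltW // lam_gt0 // leq_addl.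
- by move=> n _; rewrite invr_gt0 lam_gt0 ?leq_addl.
- by move=> n _; rewrite lef_pV2 ?posrE ?lam_gt0 ?leq_addl // lam_le.
- move=> k _; rewrite -(addnK m k.+1) -(@sum_nat_shift R (fun n => lam n * a n)) addSn.
  rewrite ler_pdivrMr ?lam_gt0 ?leq_addl //; exact: head_le (leq_addl _ _).
Qed.

Lemma sum_mul_le_of_tail_sums_le C k0 K : 0 < lam k0 -> (k0 <= K)%N ->
  (forall k, (k0 <= k <= K)%N -> \sum_(k <= n < K.+1) a n / lam n <= C / lam k) ->
  \sum_(k0 <= n < K.+1) lam n * a n <= 2 * C * lam K.
Proof.
move=> lam_k0_gt0 k0K tail_le.
have lam_gt0 n : (k0 <= n)%N -> 0 < lam n.
  by move=> k0n; apply: lt_le_trans lam_k0_gt0 _; rewrite lam_le.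
have [N defK] : exists N, K = (N + k0)%N by exists (K - k0)%N; lia.
have mul_sqr n : (k0 <= n)%N -> lam n * a n = a n / lam n * lam n ^+ 2.
  by move=> k0n; field; rewrite lt0r_neq0 ?lam_gt0.
rewrite defK sum_nat_shift -addSn addnK.
rewrite (eq_bigr _ (fun i _ => mul_sqr (i + k0)%N (leq_addl _ _))).
apply: (@suffix_sum_weighted_sqr_le R (fun i => a (i + k0) / lam (i + k0))
  (fun i => lam (i + k0)) C N).
- by move=> n; rewrite divr_ge0 // ltW // lam_gt0 // leq_addl.
- by move=> n _; rewrite lam_gt0 ?leq_addl.
- by move=> n _; rewrite lam_le leq_add2r.
- move=> k kN; rewrite -ler_pdivlMr ?lam_gt0 ?leq_addl //.
  have := tail_le (k + k0)%N; rewrite big_addn defK -addSn addnK; apply.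
  by rewrite leq_addl leq_add2r.
Qed.

Section Series.
Hypothesis lam_ge0 : forall n, 0 <= lam n.
Hypothesis lam_oo : (lam @ \oo --> +oo)%classic.

Let lam_unbounded (A : R) : exists n, A <= lam n.
Proof. by move/cvgryPge: lam_oo => /(_ A) [N _ AN]; exists N; apply: AN => /=. Qed.

Lemma lam_ge_threshold (x : R) : exists m, forall n, (x <= lam n) = (m <= n)%N.
Proof.
apply: upclosed_nat_threshold; last exact: lam_unbounded.
by move=> m n mn /le_trans; apply; rewrite lam_le.
Qed.

Lemma lam_le_threshold (x : R) : exists M, forall n, (lam n <= x) = (n < M)%N.
Proof.
have [M gt_M] : exists M, forall n, (x < lam n) = (M <= n)%N.
  apply: upclosed_nat_threshold => [m n mn /lt_le_trans | ]; first by apply; rewrite lam_le.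
  by have [n le_n] := lam_unbounded (x + 1); exists n; lra.
by exists M => n; rewrite leNgt gt_M ltnNge.
Qed.

Lemma tail_sum_bound_of_head_sum_bound :
  (exists C x0 : R, forall x, x0 <= x ->
     (\sum_(0 <= n <oo) (if (lam n <= x)%R then (lam n * a n)%:E else 0)
       <= (C * x)%:E)%E) ->
  exists C x0 : R, forall x, x0 <= x ->
     (\sum_(0 <= n <oo) (if (x <= lam n)%R then (a n / lam n)%:E else 0)
       <= (C / x)%:E)%E.
Proof.
move=> [C [x0 head_le]]; exists (2 * C), (Num.max x0 1) => x.
rewrite ge_max => /andP[x0x x_ge1]; have x_gt0 : 0 < x by lra.
have [m ge_m] := lam_ge_threshold x.
have x_lam k : (m <= k)%N -> x <= lam k by rewrite ge_m.
have head_sums k : (m <= k)%N -> \sum_(m <= n < k.+1) lam n * a n <= C * lam k.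
  move=> mk; have /nneseries_mask_le := head_le (lam k) (le_trans x0x (x_lam k mk)).
  move=> /(_ (fun n => mulr_ge0 (lam_ge0 n) (a_ge0 n)) k.+1).
  rewrite (eq_bigr (fun n => if (n < k.+1)%N then lam n * a n else 0)); last first.
    by move=> n _; rewrite lam_le.
  rewrite sum_nat_mask_ltn minnn; apply: le_trans.
  rewrite -[X in X <= _]sum_nat_mask_geq.
  by apply: ler_sum_nat => n _; case: ifP; rewrite ?mulr_ge0.
have lam_m_gt0 : 0 < lam m by apply: lt_le_trans x_gt0 (x_lam m (leqnn m)).
have C_ge0 : 0 <= C.
  have := head_sums m (leqnn m).
  by rewrite big_nat1 mulrC ler_pM2r // => /(le_trans (a_ge0 m)).
apply/nneseries_mask_le => [n | N]; first by rewrite divr_ge0.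
rewrite (eq_bigr (fun n => if (m <= n)%N then a n / lam n else 0)); last first.
  by move=> n _; rewrite ge_m.
rewrite sum_nat_mask_geq.
apply: le_trans (sum_div_le_of_head_sums_le N C_ge0 lam_m_gt0 head_sums) _.
by apply: ler_wpM2l; rewrite ?mulr_ge0 // lef_pV2 ?posrE ?x_lam.
Qed.

Lemma head_sum_bound_of_tail_sum_bound :
  (exists C x0 : R, forall x, x0 <= x ->
     (\sum_(0 <= n <oo) (if (x <= lam n)%R then (a n / lam n)%:E else 0)
       <= (C / x)%:E)%E) ->
  exists C x0 : R, forall x, x0 <= x ->
     (\sum_(0 <= n <oo) (if (lam n <= x)%R then (lam n * a n)%:E else 0)
       <= (C * x)%:E)%E.
Proof.
move=> [C [x0 tail_le]]; have [k0 lam_k0_ge] := lam_unbounded (Num.max x0 1).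
move: lam_k0_ge; rewrite ge_max => /andP[x0_lam_k0 lam_k0_ge1].
pose head0 := \sum_(0 <= n < k0) lam n * a n.
exists (2 * C + 1), (Num.max (lam k0) head0) => x.
rewrite ge_max => /andP[lam_k0_x head0_x].
have [M le_M] := lam_le_threshold x.
have k0M : (k0 < M)%N by rewrite -le_M.
have [K defM] : exists K, M = K.+1 by exists M.-1; rewrite prednK // (leq_ltn_trans _ k0M).
have k0K : (k0 <= K)%N by rewrite -ltnS -defM.
have lam_k0_gt0 : 0 < lam k0 by lra.
have tail_sums k : (k0 <= k <= K)%N -> \sum_(k <= n < K.+1) a n / lam n <= C / lam k.
  move=> /andP[k0k _]; have x0_lam : x0 <= lam k by rewrite (le_trans x0_lam_k0) ?lam_le.
  have /nneseries_mask_le := tail_le (lam k) x0_lam.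
  move=> /(_ (fun n => divr_ge0 (a_ge0 n) (lam_ge0 n)) K.+1).
  rewrite (eq_bigr (fun n => if (k <= n)%N then a n / lam n else 0)) ?sum_nat_mask_geq //.
  by move=> n _; rewrite lam_le.
have C_ge0 : 0 <= C.
  have : 0 <= C / lam k0.
    apply: le_trans (tail_sums k0 _); last by rewrite leqnn k0K.
    by rewrite big_nat_cond sumr_ge0 // => n _; rewrite divr_ge0.
  by rewrite pmulr_lge0 ?invr_gt0.
have lam_K_x : lam K <= x by rewrite le_M defM.
apply/nneseries_mask_le => [n | N]; first by rewrite mulr_ge0.
rewrite (eq_bigr (fun n => if (n < K.+1)%N then lam n * a n else 0)); last first.
  by move=> n _; rewrite le_M defM.
rewrite sum_nat_mask_ltn.
apply: le_trans (ler_sum_nat_widen _ _ (geq_minr N K.+1)) _ => [n | ].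
  by rewrite mulr_ge0.
rewrite (big_cat_nat (leq0n k0) (leqW k0K)) /= -/head0.
have := sum_mul_le_of_tail_sums_le lam_k0_gt0 k0K tail_sums.
have := ler_wpM2l C_ge0 lam_K_x; lra.
Qed.

End Series.
End Dirichlet.

Lemma cmod_ge0 (R : realType) (z : R[i]) : 0 <= cmod z.
Proof. by case: z => x y; rewrite /cmod sqrtr_ge0. Qed.

Local Open Scope classical_set_scope.
Local Open Scope ereal_scope.

Theorem lemma2p2 (R : realType) (lam : nat -> R) (c : nat -> R[i]) :
  (forall n, (0 <= lam n)%R) ->
  {homo lam : m n / (m < n)%N >-> (m < n)%R} ->
  (lam @ \oo --> +oo)%R ->
  (exists (C x0 : R), forall x : R, (x0 <= x)%R ->
     \sum_(0 <= n <oo) (if (lam n <= x)%R then (lam n * cmod (c n))%:E else 0)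
       <= (C * x)%:E)
  <->
  (exists (C x0 : R), forall x : R, (x0 <= x)%R ->
     \sum_(0 <= n <oo) (if (x <= lam n)%R then (cmod (c n) / lam n)%:E else 0)
       <= (C / x)%:E).
Proof.
move=> lam_ge0 lam_incr lam_oo.
have cmod_c_ge0 n : (0 <= cmod (c n))%R by exact: cmod_ge0.
split.
- exact: tail_sum_bound_of_head_sum_bound.
- exact: head_sum_bound_of_tail_sum_bound.
Qed.
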